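(* Let $G$ be a locally Hausdorff, locally compact groupoid and $X$ a locally Hausdorff, locally compact proper (left) $G$-space, with orbit map $q:X\to G\backslash X$. Then $G\backslash X$ is locally Hausdorff and locally compact. More precisely, if $C$ is a compact subset of $X$ that has a compact Hausdorff neighborhood $K$, then $q(C)$ is Hausdorff in $G\backslash X$.
   Context: A locally Hausdorff, locally compact groupoid: groupoid operations continuous, $G^{(0)}$ Hausdorff, each point has a compact Hausdorff neighborhood, range map open. A locally Hausdorff, locally compact space: every point has a compact Hausdorff neighborhood (compact means finite-subcover property only). For a left $G$-action on $X$ with anchor $r:X\to G^{(0)}$, let $G*X=\{(\gamma,x):s(\gamma)=r(x)\}$ and $\Theta(\gamma,x)=(\gamma\cdot x,x)$; $X$ is proper if $\Theta$ is a proper map (equivalently, $\Theta^{-1}(W)$ is compact for every compact $W\subset X\times X$). $G\backslash X$ is the orbit space with the quotient topology. *)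

From Stdlib Require Import List.
Set Implicit Arguments.
Unset Strict Implicit.

Definition set (X : Type) := X -> Prop.

Record topology (X : Type) := Topology {
  open : set X -> Prop;
  open_full : open (fun _ => True);
  open_inter : forall U V, open U -> open V -> open (fun x => U x /\ V x);
  open_union : forall F : set (set X), (forall U, F U -> open U) ->
                 open (fun x => exists U, F U /\ U x)
}.

Definition prod_open {X Y : Type} (opX : set X -> Prop) (opY : set Y -> Prop)
  (W : set (X * Y)) : Prop :=
  forall p, W p -> exists U V, opX U /\ opY V /\ U (fst p) /\ V (snd p) /\
     (forall q, U (fst q) -> V (snd q) -> W q).

(* A subset A is compact: every cover of A by open sets has a finite subcover
   (no Hausdorff assumption). *)
Definition compact {X : Type} (op : set X -> Prop) (A : set X) : Prop :=
  forall F : set (set X), (forall U, F U -> op U) ->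
    (forall x, A x -> exists U, F U /\ U x) ->
    exists l : list (set X), (forall U, In U l -> F U) /\
      (forall x, A x -> exists U, In U l /\ U x).

Definition hausdorff {X : Type} (op : set X -> Prop) (A : set X) : Prop :=
  forall x y, A x -> A y -> x <> y ->
    exists U V, op U /\ op V /\ U x /\ V y /\
      (forall z, A z -> U z -> V z -> False).

Definition nbhd {X : Type} (op : set X -> Prop) (K A : set X) : Prop :=
  exists U, op U /\ (forall x, A x -> U x) /\ (forall x, U x -> K x).

Definition loc_compact_loc_hausdorff {X : Type} (op : set X -> Prop) : Prop :=
  forall x, exists K, nbhd op K (fun y => y = x) /\ compact op K /\ hausdorff op K.

Definition continuous {X Y : Type} (opX : set X -> Prop) (opY : set Y -> Prop)
  (f : X -> Y) : Prop :=
  forall V, opY V -> opX (fun x => V (f x)).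

Definition continuous_on {X Y : Type} (opX : set X -> Prop) (opY : set Y -> Prop)
  (A : set X) (f : X -> Y) : Prop :=
  forall V, opY V -> exists U, opX U /\ (forall x, A x -> (U x <-> V (f x))).

Definition open_map {X Y : Type} (opX : set X -> Prop) (opY : set Y -> Prop)
  (f : X -> Y) : Prop :=
  forall U, opX U -> opY (fun y => exists x, U x /\ f x = y).

Definition image {X Y : Type} (f : X -> Y) (A : set X) : set Y :=
  fun y => exists x, A x /\ f x = y.

(* The unit space G0 is a separate space embedded in G
   by gunit; since grng o gunit = id and both are continuous, G0 carries the
   relative topology of its image. Multiplication gmul is total but only
   meaningful on composable pairs (gsrc g = grng h). *)
Record groupoid := Groupoid {
  gG : Type;
  gG0 : Type;
  tG : topology gG;
  tG0 : topology gG0;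
  gsrc : gG -> gG0;
  grng : gG -> gG0;
  gunit : gG0 -> gG;
  gmul : gG -> gG -> gG;
  ginv : gG -> gG;
  gsrc_mul : forall g h, gsrc g = grng h -> gsrc (gmul g h) = gsrc h;
  grng_mul : forall g h, gsrc g = grng h -> grng (gmul g h) = grng g;
  gmulA : forall g h k, gsrc g = grng h -> gsrc h = grng k ->
            gmul (gmul g h) k = gmul g (gmul h k);
  gsrc_unit : forall x, gsrc (gunit x) = x;
  grng_unit : forall x, grng (gunit x) = x;
  gmul_unitl : forall g, gmul (gunit (grng g)) g = g;
  gmul_unitr : forall g, gmul g (gunit (gsrc g)) = g;
  gsrc_inv : forall g, gsrc (ginv g) = grng g;
  grng_inv : forall g, grng (ginv g) = gsrc g;
  gmul_invr : forall g, gmul g (ginv g) = gunit (grng g);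
  gmul_invl : forall g, gmul (ginv g) g = gunit (gsrc g);
  gsrc_cont : continuous (open tG) (open tG0) gsrc;
  grng_cont : continuous (open tG) (open tG0) grng;
  gunit_cont : continuous (open tG0) (open tG) gunit;
  ginv_cont : continuous (open tG) (open tG) ginv;
  gmul_cont : continuous_on (prod_open (open tG) (open tG)) (open tG)
                (fun p => gsrc (fst p) = grng (snd p))
                (fun p => gmul (fst p) (snd p))
}.

Definition lclh_groupoid (G : groupoid) : Prop :=
  hausdorff (open (tG0 G)) (fun _ => True) /\
  loc_compact_loc_hausdorff (open (tG G)) /\
  open_map (open (tG G)) (open (tG0 G)) (@grng G).

Record gspace (G : groupoid) := GSpace {
  sX : Type;
  tX : topology sX;
  sanchor : sX -> gG0 G;
  sact : gG G -> sX -> sX;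
  sanchor_act : forall g x, gsrc g = sanchor x -> sanchor (sact g x) = grng g;
  sact_unit : forall x, sact (gunit (sanchor x)) x = x;
  sact_mul : forall g h x, gsrc g = grng h -> gsrc h = sanchor x ->
               sact (gmul g h) x = sact g (sact h x);
  sanchor_cont : continuous (open tX) (open (tG0 G)) sanchor;
  sact_cont : continuous_on (prod_open (open (tG G)) (open tX)) (open tX)
                (fun p => gsrc (fst p) = sanchor (snd p))
                (fun p => sact (fst p) (snd p))
}.

Arguments sX {G}. Arguments tX {G}. Arguments sanchor {G}. Arguments sact {G}.
Unset Implicit Arguments.

Definition GstarX {G : groupoid} (X : gspace G) : set (gG G * sX X) :=
  fun p => gsrc (fst p) = sanchor X (snd p).

Definition Theta {G : groupoid} (X : gspace G) (p : gG G * sX X) : sX X * sX X :=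
  (sact X (fst p) (snd p), snd p).

Definition proper_action {G : groupoid} (X : gspace G) : Prop :=
  forall W, compact (prod_open (open (tX X)) (open (tX X))) W ->
    compact (prod_open (open (tG G)) (open (tX X)))
      (fun p => GstarX X p /\ W (Theta X p)).

Definition orbit {G : groupoid} (X : gspace G) (x : sX X) : set (sX X) :=
  fun y => exists g, gsrc g = sanchor X x /\ sact X g x = y.

Definition orbit_space {G : groupoid} (X : gspace G) : Type :=
  { S : set (sX X) | exists x, S = orbit X x }.

Definition orbit_map {G : groupoid} (X : gspace G) (x : sX X) : orbit_space X :=
  exist _ (orbit X x) (ex_intro _ x eq_refl).

Definition quotient_open {G : groupoid} (X : gspace G) (V : set (orbit_space X)) : Prop :=
  open (tX X) (fun x => V (orbit_map X x)).

(* Let q : X -> G\X be the orbit map.  Compactness is handled through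
     the notion of a set being "finitely covered" by a family of sets: finite
     unions of finitely covered sets are finitely covered, and finitely many
     requirements, each met by some member of a filter base (for instance the
     open neighbourhoods of a point), are met simultaneously by one member.
     From these we get the tube lemma and compactness of products, compactness
     of closed subsets and of continuous images, and shrinking of a compact
     Hausdorff neighbourhood to a compact set around a smaller open set.
   - q is open, because the range map of G is open.
   - Properness separates orbits: if x, y lie in a compact Hausdorff set K and
     q x <> q y, covering the compact set Theta^-1(K x K) by suitable open sets
     gives neighbourhoods A of x and B of y such that no g moves a point of
     B /\ K to a point of A /\ K.  Hence q(C) is Hausdorff whenever C has a
     compact Hausdorff neighbourhood, and the main theorem follows by applying
     this to a compact set C sandwiched between a neighbourhood of x and K. *)
From Stdlib Require Import List Classical FunctionalExtensionality PropExtensionality ProofIrrelevance.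

Definition fin_covered {S : Type} (F : set (set S)) (A : set S) : Prop :=
  exists l : list (set S), (forall U, In U l -> F U) /\
    (forall x, A x -> exists U, In U l /\ U x).

Lemma fin_covered_mono {S : Type} (F : set (set S)) (A A' : set S) :
  (forall x, A' x -> A x) -> fin_covered F A -> fin_covered F A'.
Proof. intros Hsub [l [Hl Hcov]]. exists l; split; auto. Qed.

Lemma fin_covered_sub {S : Type} (F : set (set S)) (U A : set S) :
  F U -> (forall x, A x -> U x) -> fin_covered F A.
Proof.
  intros FU HA. exists (U :: nil); split.
  - intros V [<- | []]; exact FU.
  - intros x Ax. exists U; split; [left; reflexivity | auto].
Qed.

Lemma fin_covered_union {S I : Type} (F : set (set S)) (A : set S)
  (l : list I) (B : I -> set S) :
  (forall i, In i l -> fin_covered F (B i)) ->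
  (forall x, A x -> exists i, In i l /\ B i x) -> fin_covered F A.
Proof.
  intros Hl Hcov. apply (fin_covered_mono F (fun x => exists i, In i l /\ B i x)); auto.
  clear Hcov. induction l as [|i l IH].
  - exists nil; split; [intros U [] | intros x [j [[] _]]].
  - destruct (Hl i (or_introl eq_refl)) as [l1 [H1 C1]].
    destruct IH as [l2 [H2 C2]]; [intros j Hj; apply Hl; right; exact Hj |].
    exists (l1 ++ l2); split.
    + intros U HU; apply in_app_or in HU; destruct HU; auto.
    + intros x [j [[<- | Hj] Bx]].
      * destruct (C1 x Bx) as [U [HU Ux]]. exists U; split; [apply in_or_app|]; auto.
      * destruct (C2 x (ex_intro _ j (conj Hj Bx))) as [U [HU Ux]].
        exists U; split; [apply in_or_app|]; auto.
Qed.

Definition filter_base {S : Type} (N : set S -> Prop) : Prop :=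
  N (fun _ => True) /\ (forall U V, N U -> N V -> N (fun z => U z /\ V z)).

Lemma filter_base_list {S A : Type} (N : set S -> Prop) (Q : A -> set S -> Prop)
  (l : list A) :
  filter_base N -> (forall a U V, Q a U -> (forall z, V z -> U z) -> Q a V) ->
  (forall a, In a l -> exists U, N U /\ Q a U) ->
  exists U, N U /\ (forall a, In a l -> Q a U).
Proof.
  intros [Nfull Nmeet] Qmono. induction l as [|a l IH]; intros Hl.
  - exists (fun _ => True); split; [exact Nfull | intros a []].
  - destruct (Hl a (or_introl eq_refl)) as [U [NU QU]].
    destruct IH as [V [NV QV]]; [intros b Hb; apply Hl; right; exact Hb |].
    exists (fun z => U z /\ V z); split; [apply Nmeet; auto |].
    intros b [<- | Hb]; eapply Qmono; eauto; intros z [? ?]; auto.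
Qed.

Definition open_nbhds {S : Type} (t : topology S) (x : S) : set S -> Prop :=
  fun U => open t U /\ U x.

Lemma open_nbhds_filter {S : Type} (t : topology S) (x : S) :
  filter_base (open_nbhds t x).
Proof.
  split; [split; [apply open_full | exact I] |].
  intros U V [HU Ux] [HV Vx]; split; [apply open_inter |]; auto.
Qed.

Definition rect {S T : Type} (A : set S) (B : set T) : set (S * T) :=
  fun p => A (fst p) /\ B (snd p).

Definition rect_nbhds {S T : Type} (ts : topology S) (tt : topology T) (x : S) (y : T)
  : set (S * T) -> Prop :=
  fun W => exists A B, open ts A /\ open tt B /\ A x /\ B y /\
    (forall p, rect A B p -> W p).

Lemma rect_nbhds_filter {S T : Type} (ts : topology S) (tt : topology T) x y :
  filter_base (rect_nbhds ts tt x y).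
Proof.
  split.
  - exists (fun _ => True), (fun _ => True).
    repeat split; try apply open_full; auto.
  - intros U V [A1 [B1 [HA1 [HB1 [A1x [B1y HU]]]]]] [A2 [B2 [HA2 [HB2 [A2x [B2y HV]]]]]].
    exists (fun z => A1 z /\ A2 z), (fun z => B1 z /\ B2 z).
    split; [apply open_inter; assumption |]. split; [apply open_inter; assumption |].
    split; [split; assumption |]. split; [split; assumption |].
    intros p [[A1p A2p] [B1p B2p]]. split; [apply HU | apply HV]; split; assumption.
Qed.

Lemma tube_lemma {S T : Type} (ts : topology S) (tt : topology T)
  (F : set (set (S * T))) (B : set T) (a : S) :
  compact (open tt) B -> (forall O, F O -> prod_open (open ts) (open tt) O) ->
  (forall w, B w -> exists O, F O /\ O (a, w)) ->
  exists U, open ts U /\ U a /\ fin_covered F (rect U B).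
Proof.
  intros HB HF Hcov.
  destruct (HB (fun V => open tt V /\
                  exists U, open_nbhds ts a U /\ fin_covered F (rect U V)))
    as [lb [Hlb Hlbc]].
  - intros V [HV _]; exact HV.
  - intros w Bw. destruct (Hcov w Bw) as [O [FO Ow]].
    destruct (HF O FO (a, w) Ow) as [U [V [HU [HV [Ua [Vw Hrect]]]]]].
    exists V; split; [split; [exact HV |] | exact Vw].
    exists U; split; [split; auto |].
    apply (fin_covered_sub F O); auto. intros p [Up Vp]; apply Hrect; auto.
  - destruct (filter_base_list (open_nbhds ts a) (fun V U => fin_covered F (rect U V)) lb)
      as [U [[HU Ua] HUl]].
    + apply open_nbhds_filter.
    + intros V U U' HcovU Hsub. apply (fin_covered_mono F (rect U V)); auto.
      intros p [Up Vp]; split; auto.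
    + intros V HV. destruct (Hlb V HV) as [_ HUV]; exact HUV.
    + exists U; split; [exact HU | split; [exact Ua |]].
      apply (fin_covered_union F _ lb (fun V => rect U V)); auto.
      intros p [Up Bp]. destruct (Hlbc (snd p) Bp) as [V [HV Vp]].
      exists V; split; [exact HV | split; auto].
Qed.

Lemma compact_prod {S T : Type} (ts : topology S) (tt : topology T) (A : set S) (B : set T) :
  compact (open ts) A -> compact (open tt) B ->
  compact (prod_open (open ts) (open tt)) (rect A B).
Proof.
  intros HA HB F HF Hcov.
  destruct (HA (fun U => open ts U /\ fin_covered F (rect U B))) as [lu [Hlu Hluc]].
  - intros U [HU _]; exact HU.
  - intros a Aa.
    destruct (tube_lemma ts tt F B a HB HF) as [U [HU [Ua HUB]]].
    + intros w Bw. apply Hcov; split; auto.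
    + exists U; auto.
  - apply (fin_covered_union F _ lu (fun U => rect U B)).
    + intros U HU. apply Hlu, HU.
    + intros p [Ap Bp]. destruct (Hluc (fst p) Ap) as [U [HU Up]].
      exists U; split; [exact HU | split; auto].
Qed.

Lemma compact_diff_open {S : Type} (t : topology S) (K W : set S) :
  compact (open t) K -> open t W -> compact (open t) (fun z => K z /\ ~ W z).
Proof.
  intros HK HW F HF Hcov.
  destruct (HK (fun U => F U \/ U = W)) as [l [Hl Hlc]].
  - intros U [FU | ->]; auto.
  - intros x Kx. destruct (classic (W x)) as [Wx | nWx].
    + exists W; auto.
    + destruct (Hcov x (conj Kx nWx)) as [U [FU Ux]]; eauto.
  - apply (fin_covered_union F _ l (fun U z => U z /\ ~ W z)).
    + intros U HU. destruct (Hl U HU) as [FU | ->].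
      * apply (fin_covered_sub F U); [exact FU | intros z [? ?]; auto].
      * exists nil; split; [intros V [] | intros z [Wz nWz]; contradiction].
    + intros x [Kx nWx]. destruct (Hlc x Kx) as [U [HU Ux]]. exists U; auto.
Qed.

Lemma compact_image {S T : Type} (opS : set S -> Prop) (opT : set T -> Prop) (f : S -> T)
  (A : set S) :
  continuous opS opT f -> compact opS A -> compact opT (image f A).
Proof.
  intros Hf HA F HF Hcov.
  destruct (HA (fun O => exists U, F U /\ O = (fun x => U (f x)))) as [l [Hl Hlc]].
  - intros O [U [FU ->]]. apply Hf, HF, FU.
  - intros x Ax. destruct (Hcov (f x) (ex_intro _ x (conj Ax eq_refl))) as [U [FU Ux]].
    exists (fun x => U (f x)); eauto.
  - apply (fin_covered_union F _ l (fun O => image f O)).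
    + intros O HO. destruct (Hl O HO) as [U [FU ->]].
      apply (fin_covered_sub F U); [exact FU | intros y [x [Ux <-]]; exact Ux].
    + intros y [x [Ax <-]]. destruct (Hlc x Ax) as [O [HO Ox]].
      exists O; split; [exact HO | exists x; auto].
Qed.

Lemma separate_point_compact {S : Type} (t : topology S) (K D : set S) (x : S) :
  hausdorff (open t) K -> K x -> compact (open t) D -> (forall z, D z -> K z) -> ~ D x ->
  exists V W, open t V /\ open t W /\ V x /\ (forall z, D z -> W z) /\
    (forall z, K z -> V z -> W z -> False).
Proof.
  intros HK Kx HD DK nDx.
  set (Q := fun W V => forall z, K z -> V z -> W z -> False).
  destruct (HD (fun W => open t W /\ exists V, open_nbhds t x V /\ Q W V)) as [l [Hl Hlc]].
  - intros U [HU _]; exact HU.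
  - intros p Dp. assert (Hpx : x <> p) by (intros ->; contradiction).
    destruct (HK x p Kx (DK p Dp) Hpx) as [V [W [HV [HW [Vx [Wp Hd]]]]]].
    exists W; split; [split; [exact HW |] | exact Wp].
    exists V; split; [split |]; auto.
  - destruct (filter_base_list (open_nbhds t x) Q l) as [V [[HV Vx] HVl]].
    + apply open_nbhds_filter.
    + intros W V V' HQ Hsub z Kz V'z Wz. exact (HQ z Kz (Hsub z V'z) Wz).
    + intros W HW. destruct (Hl W HW) as [_ HQ]; exact HQ.
    + exists V, (fun z => exists W, In W l /\ W z). split; [exact HV |]. split.
      * apply (open_union (F := fun W => In W l)). intros W HW. apply Hl, HW.
      * split; [exact Vx | split; [exact Hlc |]].
        intros z Kz Vz [W [HW Wz]]. exact (HVl W HW z Kz Vz Wz).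
Qed.

Lemma compact_nbhd_shrink {S : Type} (t : topology S) (K U : set S) (x : S) :
  compact (open t) K -> hausdorff (open t) K -> open t U -> U x ->
  (forall z, U z -> K z) ->
  exists V C, open t V /\ V x /\ (forall z, V z -> C z) /\ (forall z, C z -> U z) /\
    compact (open t) C.
Proof.
  intros HK HH HU Ux UK.
  set (D := fun z => K z /\ ~ U z).
  destruct (separate_point_compact t K D x HH (UK x Ux)) as [V [W [HV [HW [Vx [DW Hd]]]]]].
  - apply compact_diff_open; auto.
  - intros z [Kz _]; exact Kz.
  - intros [_ nUx]; contradiction.
  - exists (fun z => V z /\ U z), (fun z => K z /\ ~ W z).
    split; [apply open_inter; auto |]. split; [auto |]. split; [| split].
    + intros z [Vz Uz]. split; [auto | intros Wz; exact (Hd z (UK z Uz) Vz Wz)].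
    + intros z [Kz nWz]. apply NNPP. intros nUz. exact (nWz (DW z (conj Kz nUz))).
    + apply compact_diff_open; auto.
Qed.

Lemma open_of_local {S : Type} (t : topology S) (Z : set S) :
  (forall z, Z z -> exists U, open t U /\ U z /\ (forall w, U w -> Z w)) -> open t Z.
Proof.
  intros H.
  replace Z with (fun x => exists U, (open t U /\ forall w, U w -> Z w) /\ U x).
  - apply open_union. intros U [HU _]; exact HU.
  - apply functional_extensionality; intro x; apply propositional_extensionality; split.
    + intros [U [[_ HZ] Ux]]; auto.
    + intros Zx. destruct (H x Zx) as [U [HU [Ux HZ]]]. exists U; auto.
Qed.

Lemma ginv_inv (G : groupoid) (g : gG G) : ginv (ginv g) = g.
Proof.
  rewrite <- (gmul_unitr (ginv (ginv g))).
  assert (Hsrc : gsrc (ginv (ginv g)) = gsrc g) by (rewrite gsrc_inv, grng_inv; reflexivity).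
  rewrite Hsrc, <- gmul_invl, <- gmulA.
  - rewrite (gmul_invl (ginv g)), gsrc_inv. apply gmul_unitl.
  - rewrite Hsrc, grng_inv; reflexivity.
  - rewrite gsrc_inv; reflexivity.
Qed.

Section OrbitSpace.

Variable G : groupoid.
Variable X : gspace G.

Lemma orbit_map_surjective (S : orbit_space X) : exists x, S = orbit_map X x.
Proof.
  destruct S as [s [x Hs]]. exists x. unfold orbit_map.
  subst s. reflexivity.
Qed.

Lemma orbit_map_continuous : continuous (open (tX X)) (quotient_open X) (orbit_map X).
Proof. intros V HV; exact HV. Qed.

Lemma orbit_act (g : gG G) (z : sX X) :
  gsrc g = sanchor X z -> orbit X (sact X g z) = orbit X z.
Proof.
  intros Hg. apply functional_extensionality; intro y; apply propositional_extensionality.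
  unfold orbit; split.
  - intros [h [Hh <-]]. rewrite (sanchor_act Hg) in Hh.
    exists (gmul h g). split; [rewrite gsrc_mul; auto | apply sact_mul; auto].
  - intros [h [Hh <-]].
    assert (Hinv : gsrc (ginv g) = sanchor X (sact X g z))
      by (rewrite gsrc_inv, (sanchor_act Hg); reflexivity).
    assert (Hcomp : gsrc h = grng (ginv g)) by (rewrite grng_inv; congruence).
    exists (gmul h (ginv g)). split.
    + rewrite gsrc_mul; [exact Hinv | exact Hcomp].
    + rewrite (sact_mul Hcomp Hinv), <- (sact_mul (gsrc_inv g) Hg).
      rewrite gmul_invl, Hg, sact_unit; reflexivity.
Qed.

Lemma orbit_map_act (g : gG G) (z : sX X) :
  gsrc g = sanchor X z -> orbit_map X (sact X g z) = orbit_map X z.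
Proof. intros Hg. apply subset_eq_compat, orbit_act, Hg. Qed.

Lemma orbit_map_eq (a b : sX X) :
  orbit_map X a = orbit_map X b -> exists g, gsrc g = sanchor X b /\ sact X g b = a.
Proof.
  intros E. apply (f_equal (@proj1_sig _ _)) in E. simpl in E.
  assert (Ha : orbit X a a).
  { exists (gunit (sanchor X a)). split; [apply gsrc_unit | apply sact_unit]. }
  rewrite E in Ha. exact Ha.
Qed.

Lemma orbit_image_open (A : set (sX X)) :
  open_map (open (tG G)) (open (tG0 G)) (@grng G) ->
  open (tX X) A -> quotient_open X (image (orbit_map X) A).
Proof.
  intros Hrng HA. apply open_of_local.
  intros z0 [a0 [Aa0 Ea0]].
  destruct (orbit_map_eq a0 z0 Ea0) as [g0 [Hg0 <-]].
  destruct (sact_cont HA) as [O [HO HOact]].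
  assert (Og0 : O (g0, z0)) by (apply (HOact (g0, z0)); auto).
  destruct (HO _ Og0) as [P [Q [HP [HQ [Pg0 [Qz0 HPQ]]]]]].
  set (R := fun u => exists h, P (ginv h) /\ grng h = u).
  assert (HR : open (tG0 G) R) by (apply (Hrng (fun h => P (ginv h))), ginv_cont, HP).
  exists (fun z => Q z /\ R (sanchor X z)). split; [| split].
  - apply open_inter; [exact HQ | apply (sanchor_cont X), HR].
  - split; [exact Qz0 |]. exists (ginv g0). rewrite ginv_inv, grng_inv. auto.
  - intros z [Qz [h [Ph Eh]]].
    assert (Hs : gsrc (ginv h) = sanchor X z) by (rewrite gsrc_inv; exact Eh).
    exists (sact X (ginv h) z). split.
    + apply (HOact (ginv h, z)); [exact Hs | apply (HPQ (ginv h, z)); auto].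
    + apply orbit_map_act, Hs.
Qed.

Definition keeps_apart (K : set (sX X)) (O : set (gG G * sX X)) (W : set (sX X * sX X))
  : Prop :=
  forall p, GstarX X p -> O p -> rect K K (Theta X p) -> W (Theta X p) -> False.

Lemma local_orbit_separation (K : set (sX X)) (x y : sX X) (g : gG G) (b : sX X) :
  hausdorff (open (tX X)) K -> K x -> K y -> orbit_map X x <> orbit_map X y ->
  gsrc g = sanchor X b -> K (sact X g b) -> K b ->
  exists O, prod_open (open (tG G)) (open (tX X)) O /\ O (g, b) /\
    exists W, rect_nbhds (tX X) (tX X) x y W /\ keeps_apart K O W.
Proof.
  intros HH Kx Ky Hne Hgb Ka Kb.
  destruct (classic (b = y)) as [-> | Hby].
  - (* g.y and x are distinct points of K: separate them and pull back by the action *)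
    assert (Hgy : sact X g y <> x)
      by (intros E; apply Hne; rewrite <- E; apply orbit_map_act, Hgb).
    destruct (HH _ _ Ka Kx Hgy) as [V [W [HV [HW [Va [Wx Hd]]]]]].
    destruct (sact_cont HV) as [O [HO HOact]].
    exists O. split; [exact HO |]. split; [apply (HOact (g, y)); auto |].
    exists (rect W (fun _ => True)). split.
    + exists W, (fun _ => True). split; [exact HW |]. split; [apply open_full |].
      split; [exact Wx |]. split; [exact I |]. intros p Hp; exact Hp.
    + intros p Hp Op [Kp _] [Wp _]. exact (Hd _ Kp (proj1 (HOact p Hp) Op) Wp).
  - (* b and y are distinct points of K: separate them in the second factor *)
    destruct (HH _ _ Kb Ky Hby) as [V [W [HV [HW [Vb [Wy Hd]]]]]].
    exists (fun p => V (snd p)). split; [| split; [exact Vb |]].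
    + intros p Vp. exists (fun _ => True), V. split; [apply open_full |].
      split; [exact HV |]. split; [exact I |]. split; [exact Vp |]. intros q _ Vq; exact Vq.
    + exists (rect (fun _ => True) W). split.
      * exists (fun _ => True), W. split; [apply open_full |]. split; [exact HW |].
        split; [exact I |]. split; [exact Wy |]. intros p Hp; exact Hp.
      * intros p _ Vp [_ Kp] [_ Wp]. exact (Hd _ Kp Vp Wp).
Qed.

(* Properness separates distinct orbits through a compact Hausdorff set K:
   covering the compact set Theta^-1(K x K) by the sets of the previous lemma
   gives neighbourhoods A of x and B of y such that no arrow moves a point of
   B /\ K into A /\ K. *)
Lemma proper_orbit_separation (K : set (sX X)) (x y : sX X) :
  proper_action X -> compact (open (tX X)) K -> hausdorff (open (tX X)) K ->
  K x -> K y -> orbit_map X x <> orbit_map X y ->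
  exists A B, open (tX X) A /\ open (tX X) B /\ A x /\ B y /\
    (forall g b, gsrc g = sanchor X b -> K b -> K (sact X g b) ->
       A (sact X g b) -> B b -> False).
Proof.
  intros Hpr HK HH Kx Ky Hne.
  set (N := rect_nbhds (tX X) (tX X) x y).
  destruct (Hpr (rect K K) (compact_prod (tX X) (tX X) K K HK HK)
              (fun O => prod_open (open (tG G)) (open (tX X)) O /\
                        exists W, N W /\ keeps_apart K O W))
    as [l [Hl Hlc]].
  - intros O [HO _]; exact HO.
  - intros [g b] [Hgb [Ka Kb]].
    destruct (local_orbit_separation K x y g b HH Kx Ky Hne Hgb Ka Kb)
      as [O [HO [Ogb HW]]].
    exists O; auto.
  - destruct (filter_base_list N (keeps_apart K) l)
      as [W [[A [B [HA [HB [Ax [By HAB]]]]]] HWl]].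
    + apply rect_nbhds_filter.
    + intros O W W' HQ Hsub p Hp Op HKp W'p. exact (HQ p Hp Op HKp (Hsub _ W'p)).
    + intros O HO. destruct (Hl O HO) as [_ HQ]; exact HQ.
    + exists A, B. split; [exact HA |]. split; [exact HB |]. split; [exact Ax |].
      split; [exact By |].
      intros g b Hg Kb Ka Aa Bb.
      assert (HKp : rect K K (Theta X (g, b))) by (split; assumption).
      destruct (Hlc (g, b) (conj Hg HKp)) as [O [HO Op]].
      apply (HWl O HO (g, b) Hg Op HKp), HAB. split; assumption.
Qed.

Lemma orbit_image_hausdorff (C K : set (sX X)) :
  open_map (open (tG G)) (open (tG0 G)) (@grng G) -> proper_action X ->
  nbhd (open (tX X)) K C -> compact (open (tX X)) K -> hausdorff (open (tX X)) K ->
  hausdorff (quotient_open X) (image (orbit_map X) C).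
Proof.
  intros Hrng Hpr [U [HU [CU UK]]] HK HH.
  intros Sx Sy [x [Cx <-]] [y [Cy <-]] Hne.
  destruct (proper_orbit_separation K x y Hpr HK HH (UK x (CU x Cx)) (UK y (CU y Cy)) Hne)
    as [A [B [HA [HB [Ax [By Hsep]]]]]].
  exists (image (orbit_map X) (fun z => A z /\ U z)),
         (image (orbit_map X) (fun z => B z /\ U z)).
  split; [apply orbit_image_open, open_inter; auto |].
  split; [apply orbit_image_open, open_inter; auto |].
  split; [exists x; auto |]. split; [exists y; auto |].
  intros S _ [a [[Aa Ua] Ea]] [b [[Bb Ub] Eb]].
  rewrite <- Eb in Ea. destruct (orbit_map_eq a b Ea) as [g [Hg Eg]].
  rewrite <- Eg in Aa, Ua.
  exact (Hsep g b Hg (UK b Ub) (UK _ Ua) Aa Bb).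
Qed.

End OrbitSpace.

Theorem mainTheorem3 (G : groupoid) (X : gspace G) :
  lclh_groupoid G ->
  loc_compact_loc_hausdorff (open (tX X)) ->
  proper_action X ->
  loc_compact_loc_hausdorff (quotient_open X) /\
  (forall C K : set (sX X),
     compact (open (tX X)) C ->
     nbhd (open (tX X)) K C -> compact (open (tX X)) K -> hausdorff (open (tX X)) K ->
     hausdorff (quotient_open X) (image (orbit_map X) C)).
Proof.
  intros [_ [_ Hrng]] HX Hpr. split.
  2: { intros C K _. apply orbit_image_hausdorff; assumption. }
  intros S. destruct (orbit_map_surjective G X S) as [x ->].
  destruct (HX x) as [K [[U [HU [Ux UK]]] [HK HH]]].
  destruct (compact_nbhd_shrink (tX X) K U x HK HH HU (Ux x eq_refl) UK)
    as [V [C [HV [Vx [VC [CU HC]]]]]].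
  exists (image (orbit_map X) C). split; [| split].
  - exists (image (orbit_map X) V). split; [apply orbit_image_open; assumption |].
    split; [intros T ->; exists x; auto |].
    intros T [z [Vz <-]]. exists z; auto.
  - apply (compact_image _ _ _ C (orbit_map_continuous G X) HC).
  - apply (orbit_image_hausdorff G X C K Hrng Hpr); [| assumption | assumption].
    exists U. auto.
Qed.
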